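(* Let $m>0$ and let $f\colon\mathbb{C}\mathbb{P}^m\to\mathbb{C}\mathbb{P}^N$ be an algebraic morphism given by $[x]\mapsto[f_0(x),\dots,f_N(x)]$, where $f_0,\dots,f_N$ are linearly independent homogeneous polynomials of degree $d$. If $f$ is projectively $k$-regular, then $d\ge k-1$.
   Context: A map $f\colon\mathbb{C}\mathbb{P}^m\to\mathbb{C}\mathbb{P}^N$ is projectively $k$-regular if the images of any $k$ distinct points span a $(k-1)$-dimensional projective linear subspace. *)

From HB Require Import structures.
From mathcomp Require Import all_boot all_order all_algebra.
From mathcomp Require Import reals.
From mathcomp Require Import complex.
From mathcomp Require Import mpoly.
Set Implicit Arguments. Unset Strict Implicit. Unset Printing Implicit Defensive.
Import Order.TTheory GRing.Theory Num.Theory.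
Local Open Scope ring_scope.

(* The complex numbers: C = R[i] for R : realType. A point of C^(m+1) is a
   function 'I_(m+1) -> C; a point of CP^m is represented by a nonzero one. *)

Definition distinct_proj_points {C : fieldType} {n : nat} (x y : 'I_n -> C) : Prop :=
  \rank (\matrix_(i < 2, j < n) (if i == ord0 then x j else y j)) = 2%N.

Definition polymap_eval {C : comRingType} {n N : nat}
  (f : 'I_N.+1 -> {mpoly C[n]}) (x : 'I_n -> C) : 'I_N.+1 -> C :=
  fun j => (f j).@[x].

Definition is_proj_morphism {C : fieldType} {m N : nat} (d : nat)
  (f : 'I_N.+1 -> {mpoly C[m.+1]}) : Prop :=
  (forall j, f j \is d.-homog) /\
  (forall x : 'I_m.+1 -> C, (exists i, x i != 0) ->
     exists j, polymap_eval f x j != 0).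

Definition polys_lin_indep {C : fieldType} {n N : nat}
  (f : 'I_N.+1 -> {mpoly C[n]}) : Prop :=
  forall c : 'I_N.+1 -> C, \sum_(j < N.+1) c j *: f j = 0 -> forall j, c j = 0.

(* Projectively k-regular: the images of any k distinct points span a
   (k-1)-dimensional projective subspace, i.e. the k image vectors in
   C^(N+1) are linearly independent (the k x (N+1) matrix has rank k). *)
Definition proj_k_regular {C : fieldType} {m N : nat} (k : nat)
  (f : 'I_N.+1 -> {mpoly C[m.+1]}) : Prop :=
  forall x : 'I_k -> ('I_m.+1 -> C),
    (forall a b : 'I_k, a != b -> distinct_proj_points (x a) (x b)) ->
    \rank (\matrix_(a < k, j < N.+1) polymap_eval f (x a) j) = k.

From HB Require Import structures.
From mathcomp Require Import all_boot all_order all_algebra.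
From mathcomp Require Import reals complex mpoly ring.
Set Implicit Arguments. Unset Strict Implicit. Unset Printing Implicit Defensive.
Import Order.TTheory GRing.Theory Num.Theory.
Local Open Scope ring_scope.

(* Restricted to a line t |-> (1, t, 0, ..., 0), a homogeneous polynomial of
   degree d becomes a polynomial of degree at most d in t.  Hence the k x (N+1)
   matrix of images of k points on that line factors through C^(d+1) and has
   rank at most d + 1, while k-regularity forces rank k once the k points are
   distinct, e.g. t = 0, 1, ..., k - 1 in characteristic zero. *)

Lemma distinct_proj_points_minor (C : fieldType) (n : nat) (i0 i1 : 'I_n)
    (x y : 'I_n -> C) :
  x i0 * y i1 - x i1 * y i0 != 0 -> distinct_proj_points x y.
Proof.
move=> nzD; set D := _ - _ in nzD.
have i10 : i1 != i0 by apply: contraNneq nzD => i10; rewrite /D i10 mulrC subrr.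
rewrite /distinct_proj_points; set A := \matrix_(i < 2, j < n) _.
(* the right inverse of A carries the adjugate of its (i0, i1) minor *)
pose adj (s : 'I_2) (l : 'I_n) : C :=
  if s == 0 then (if l == i0 then y i1 else if l == i1 then - y i0 else 0)
  else (if l == i0 then - x i1 else if l == i1 then x i0 else 0).
pose B : 'M[C]_(n, 2) := \matrix_(l, s) (adj s l / D).
have AB : A *m B = 1%:M.
  apply/matrixP => r s; rewrite !mxE (bigD1 i0) //= (bigD1 i1) //=.
  rewrite big1 ?addr0; last first.
    move=> l /andP[l1 l0].
    by rewrite !mxE /adj (negbTE l0) (negbTE l1) if_same mul0r mulr0.
  rewrite !mxE /adj eqxx (negbTE i10) eqxx.
  case: r => [[|[|//]]] ?; case: s => [[|[|//]]] ? /=; rewrite /D; field; exact: nzD.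
apply/eqP; rewrite eqn_leq rank_leq_row /=.
by have := mxrankM_maxl A B; rewrite AB mxrank1.
Qed.

Section HomogOnLine.
Variables (C : comNzRingType) (n : nat) (w : 'I_n -> C) (i : 'I_n).

Definition line_point (t : C) : 'I_n -> C := fun l => if l == i then t else w l.

Definition line_coef (p : {mpoly C[n]}) (e : nat) : C :=
  \sum_(mm <- msupp p)
     (if mm i == e then p@_mm * \prod_(l | l != i) w l ^+ mm l else 0).

Lemma homog_eval_line_point (d : nat) (p : {mpoly C[n]}) (t : C) :
  p \is d.-homog -> p.@[line_point t] = \sum_(e < d.+1) t ^+ e * line_coef p e.
Proof.
move=> hp; rewrite mevalE /line_coef.
under [RHS]eq_bigr => e _ do rewrite mulr_sumr.
rewrite exchange_big /= !big_seq; apply: eq_bigr => mm mm_p.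
have mm_i_le : (mm i < d.+1)%N.
  by rewrite ltnS -[d](dhomog_mf hp mm_p) /= mdegE (bigD1 i) //= leq_addr.
rewrite [RHS](bigD1 (Ordinal mm_i_le)) //= eqxx [X in _ + X]big1 ?addr0; last first.
  move=> e ne; case: eqP => [mm_e|_]; last by rewrite mulr0.
  by case/eqP: ne; apply: val_inj.
rewrite (bigD1 i) //= /line_point eqxx mulrCA; congr (_ * (_ * _)).
by apply: eq_bigr => l /negbTE ->.
Qed.

End HomogOnLine.

Lemma rank_polymap_line_le (C : fieldType) (n N d k : nat)
    (f : 'I_N.+1 -> {mpoly C[n]}) (w : 'I_n -> C) (i : 'I_n) (t : 'I_k -> C) :
  (forall j, f j \is d.-homog) ->
  (\rank (\matrix_(a < k, j < N.+1) polymap_eval f (line_point w i (t a)) j)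
     <= d.+1)%N.
Proof.
move=> homf.
pose V : 'M[C]_(k, d.+1) := \matrix_(a, e) t a ^+ e.
pose Cf : 'M[C]_(d.+1, N.+1) := \matrix_(e, j) line_coef w i (f j) e.
have -> : \matrix_(a < k, j < N.+1) polymap_eval f (line_point w i (t a)) j
          = V *m Cf.
  apply/matrixP => a j.
  rewrite !mxE /polymap_eval (homog_eval_line_point w i (t a) (homf j)).
  by apply: eq_bigr => e _; rewrite !mxE.
exact: leq_trans (mxrankM_maxl V Cf) (rank_leq_col V).
Qed.

Theorem lemma6p5 (R : realType) (m N d k : nat)
  (f : 'I_N.+1 -> {mpoly (R[i])[m.+1]}) :
  (0 < m)%N ->
  is_proj_morphism d f ->
  polys_lin_indep f ->
  proj_k_regular k f ->
  (k.-1 <= d)%N.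
Proof.
move=> m_gt0 [homf _] _ kreg.
pose i1 : 'I_m.+1 := inord 1.
have i10 : i1 != ord0 by rewrite -val_eqE /= inordK.
pose w : 'I_m.+1 -> R[i] := fun l => (l == ord0)%:R.
pose x (a : 'I_k) := line_point w i1 (a%:R).
have x_distinct (a b : 'I_k) : a != b -> distinct_proj_points (x a) (x b).
  move=> ab; apply: (@distinct_proj_points_minor _ _ ord0 i1).
  rewrite /x /line_point [ord0 == _]eq_sym (negbTE i10) eqxx /w eqxx.
  by rewrite mul1r mulr1 subr_eq0 eqr_nat eq_sym.
have := rank_polymap_line_le w i1 (fun a : 'I_k => a%:R : R[i]) homf.
by rewrite (kreg x x_distinct) => /(leq_sub2r 1); rewrite !subn1.
Qed.
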